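(* Let $m\ge 2$ be an integer and let $H$ be a finite simple connected graph of order at least $2$ with $n(H) \le m$. The Cartesian product $K_m \,\square\, H$ is well-dominated if and only if one of the following holds: (1) $m=2$ and $H$ is isomorphic to $K_2$; (2) $m=3$ and $H$ is isomorphic to $K_3$ or to the path $P_3$; (3) $m \ge 4$ and $H$ is isomorphic to $K_m$.
   Context: $n(H)$ is the order of $H$. A graph is well-dominated if every minimal (with respect to inclusion) dominating set is a minimum dominating set. The Cartesian product $G\,\square\, H$ has vertex set $V(G)\times V(H)$, with $(g_1,h_1)$ adjacent to $(g_2,h_2)$ iff either ($g_1=g_2$ and $h_1h_2\in E(H)$) or ($h_1=h_2$ and $g_1g_2\in E(G)$). *)

From mathcomp Require Import all_boot.
Set Implicit Arguments. Unset Strict Implicit. Unset Printing Implicit Defensive.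

Definition simple_graph (T : finType) (e : rel T) : Prop :=
  symmetric e /\ irreflexive e.

Definition connected_graph (T : finType) (e : rel T) : Prop :=
  forall x y : T, connect e x y.

Definition dominating (T : finType) (e : rel T) (D : {set T}) : Prop :=
  forall v : T, v \in D \/ exists2 u, u \in D & e u v.

Definition minimal_dominating (T : finType) (e : rel T) (D : {set T}) : Prop :=
  dominating e D /\ forall D' : {set T}, D' \proper D -> ~ dominating e D'.

Definition minimum_dominating (T : finType) (e : rel T) (D : {set T}) : Prop :=
  dominating e D /\ forall D' : {set T}, dominating e D' -> #|D| <= #|D'|.

Definition well_dominated (T : finType) (e : rel T) : Prop :=
  forall D : {set T}, minimal_dominating e D -> minimum_dominating e D.

Definition graph_iso (T1 T2 : finType) (e1 : rel T1) (e2 : rel T2) : Prop :=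
  exists f : T1 -> T2, bijective f /\ forall x y, e2 (f x) (f y) = e1 x y.

Definition Kedge (m : nat) : rel 'I_m := fun i j => i != j.

Definition P3edge : rel 'I_3 :=
  fun i j => ((i : nat) == j.+1) || ((j : nat) == i.+1).

Definition cart_edge (T1 T2 : finType) (e1 : rel T1) (e2 : rel T2)
  : rel (T1 * T2) :=
  fun x y => ((x.1 == y.1) && e2 x.2 y.2) || ((x.2 == y.2) && e1 x.1 y.1).

From mathcomp Require Import all_boot zify.
Set Implicit Arguments. Unset Strict Implicit. Unset Printing Implicit Defensive.

(* A dominating set of K_m □ H meets every K_m-fibre {(i, h) | i} or every
   layer {i} × V(H), hence has at least min(m, n(H)) vertices, while a single
   layer dominates. For the rook graph K_m □ K_m both families are cliques, so a
   minimal dominating set meets each of them at most once and has exactly m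
   vertices; for K_3 □ P_3 the same bound is checked by enumeration.
   Conversely, if K_m □ H is well-dominated, no minimal dominating set has more
   than n(H) vertices. A vertex with a private neighbour in a dominating set D
   belongs to every minimal dominating subset of D, so it suffices to exhibit
   dominating sets with more than n(H) such vertices: the fibre of h together
   with the non-neighbours of h in one layer forces n(H) = m and at most one
   non-neighbour per vertex; then some vertex d is universal, since otherwise
   the fibres of the two ends of an edge would supply 2m such vertices; and for
   m >= 4 the fibre of d minus one vertex, completed by a non-edge in that
   layer, rules out every non-edge. *)

Fixpoint sublists (T : Type) (s : seq T) : seq (seq T) :=
  if s is x :: s' then [seq x :: t | t <- sublists s'] ++ sublists s' else [:: [::]].

Lemma filter_sublists (T : eqType) (p : pred T) (s : seq T) :
  filter p s \in sublists s.
Proof.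
elim: s => [|x s IHs] //=; rewrite mem_cat; case: (p x); last by rewrite IHs orbT.
by rewrite (map_f (cons x) IHs).
Qed.

Section Domination.
Variables (T : finType) (e : rel T).
Implicit Types (D S : {set T}) (u v x : T).

Definition dominates u v := (u == v) || e u v.

Definition dominatingb D := [forall v, [exists u in D, dominates u v]].

Lemma dominatingE D :
  dominating e D <-> forall v, exists2 u, u \in D & dominates u v.
Proof.
split=> dD v; last by have [u uD /orP[/eqP <-|euv]] := dD v; [left | right; exists u].
case: (dD v) => [vD|[u uD euv]].
  by exists v; rewrite // /dominates eqxx.
by exists u; rewrite // /dominates euv orbT.
Qed.

Lemma dominatingP D : reflect (dominating e D) (dominatingb D).
Proof.
apply: (iffP forallP) => [dD|/dominatingE dD v].
  by apply/dominatingE => v; have /existsP[u /andP[uD duv]] := dD v; exists u.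
by have [u uD duv] := dD v; apply/existsP; exists u; rewrite uD.
Qed.

Lemma minimal_dominating_exists D :
  dominating e D -> exists2 D' : {set T}, D' \subset D & minimal_dominating e D'.
Proof.
move/dominatingP/minset_exists => [D' /minsetP[/dominatingP dD' minD'] sD'D].
exists D' => //; split=> [//|B ltBD' /dominatingP dB].
have BD' := minD' B dB (proper_sub ltBD').
by rewrite BD' properxx in ltBD'.
Qed.

Definition private_nbr D x v := forall u, u \in D -> dominates u v -> u = x.

Lemma private_nbr_mem D D' x v :
  D' \subset D -> dominating e D' -> private_nbr D x v -> x \in D'.
Proof.
move=> sD'D /dominatingE/(_ v)[u uD' duv] prx.
by rewrite -(prx u (subsetP sD'D u uD') duv).
Qed.

Lemma well_dominated_private_card D D0 S :
  well_dominated e -> dominating e D -> dominating e D0 ->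
  {in S, forall x, exists v, private_nbr D x v} -> #|S| <= #|D0|.
Proof.
move=> wd dD dD0 prS; have [D' sD'D minD'] := minimal_dominating_exists dD.
have sSD' : S \subset D'.
  by apply/subsetP => x /prS[v]; apply: private_nbr_mem sD'D minD'.1.
exact: leq_trans (subset_leq_card sSD') ((wd D' minD').2 D0 dD0).
Qed.

Lemma well_dominated_of_bounds k :
  (forall D, dominating e D -> k <= #|D|) ->
  (forall D, minimal_dominating e D -> #|D| <= k) -> well_dominated e.
Proof.
move=> lb ub D minD; split=> [|D' /lb]; first by case: minD.
exact: leq_trans (ub D minD).
Qed.

Section CliqueFibres.
Variables (U : finType) (p : T -> U).
Hypothesis p_clique : forall u v, p u = p v -> u != v -> e u v.

Lemma dominating_cover D : [set: U] \subset p @: D -> dominating e D.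
Proof.
move=> covD; apply/dominatingE => v.
have /imsetP[u uD puv] := subsetP covD (p v) (in_setT _).
by exists u; rewrite // /dominates; case: eqVneq => //= uv; apply: p_clique.
Qed.

Lemma minimal_cover_card D :
  minimal_dominating e D -> [set: U] \subset p @: D -> #|D| <= #|U|.
Proof.
move=> [_ minD] covD.
suff injD : {in D &, injective p} by rewrite -(card_in_imset injD) max_card.
move=> x y xD yD pxy; apply/eqP/negPn/negP => xy.
apply: (minD (D :\ x) (properD1 xD)); apply: dominating_cover.
apply/subsetP => i _; have /imsetP[z zD ->] := subsetP covD i (in_setT _).
case: (eqVneq z x) => [->|zx]; last by apply: imset_f; rewrite !inE zx.
by rewrite pxy; apply: imset_f; rewrite !inE eq_sym xy.
Qed.

End CliqueFibres.

Section DecideByEnumeration.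
Variable vs : seq T.
Hypotheses (vs_uniq : uniq vs) (vs_all : forall v, v \in vs).

Definition dominating_seq (s : seq T) := all (fun v => has (dominates^~ v) s) vs.

Definition minimal_dominating_seq (s : seq T) :=
  dominating_seq s && all (fun x => ~~ dominating_seq (rem x s)) s.

Lemma dominating_seqE s D : s =i D -> dominating_seq s = dominatingb D.
Proof.
move=> sD; apply/allP/dominatingP => [dom | /dominatingE dD v _].
  by apply/dominatingE => v; have /hasP[u] := dom v (vs_all v); rewrite sD; exists u.
by have [u uD duv] := dD v; apply/hasP; exists u; rewrite ?sD.
Qed.

Lemma minimal_dominating_card_le k :
  all (fun s => minimal_dominating_seq s ==> (size s <= k)) (sublists vs) ->
  forall D, minimal_dominating e D -> #|D| <= k.
Proof.
move=> /allP check D [dD minD]; set s := [seq v <- vs | v \in D].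
have sD : s =i D by move=> v; rewrite mem_filter vs_all andbT.
have s_uniq : uniq s := filter_uniq _ vs_uniq.
have -> : #|D| = size s by rewrite -(card_uniqP s_uniq); apply: eq_card => v; rewrite sD.
apply: (implyP (check s (filter_sublists _ _))); apply/andP; split.
  by rewrite (dominating_seqE sD); apply/dominatingP.
apply/allP => x xs; rewrite (@dominating_seqE _ (D :\ x)); last first.
  by move=> v; rewrite mem_rem_uniq // !inE sD.
by apply/dominatingP; apply: minD; apply: properD1; rewrite -sD.
Qed.

End DecideByEnumeration.
End Domination.

Lemma dominating_imset (T1 T2 : finType) (e1 : rel T1) (e2 : rel T2)
    (f : T1 -> T2) (g : T2 -> T1) (D : {set T1}) :
  cancel f g -> cancel g f -> {mono f : x y / e1 x y >-> e2 x y} ->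
  dominating e1 D -> dominating e2 (f @: D).
Proof.
move=> fK gK fE /dominatingE dD; apply/dominatingE => v.
have [u uD duv] := dD (g v); exists (f u); first exact: imset_f.
by rewrite -[v]gK /dominates fE (can_eq fK).
Qed.

Section Isomorphism.
Variables (T1 T2 : finType) (e1 : rel T1) (e2 : rel T2).

Lemma well_dominated_iso : graph_iso e1 e2 -> well_dominated e2 -> well_dominated e1.
Proof.
case=> f [[g fK gK] fE] wd2 D [dD minD].
have gE : {mono g : x y / e2 x y >-> e1 x y} := can_mono gK fE.
have minfD : minimal_dominating e2 (f @: D).
  split=> [|B ltB dB]; first exact: dominating_imset fK gK fE dD.
  apply: (minD (g @: B)); last exact: dominating_imset gK fK gE dB.
  move: ltB; rewrite !properEcard (card_imset _ (can_inj fK)).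
  rewrite (card_imset _ (can_inj gK)) => /andP[sBfD ->]; rewrite andbT.
  by apply/subsetP => _ /imsetP[b /(subsetP sBfD)/imsetP[d dD' ->] ->]; rewrite fK.
split=> // D' dD'; rewrite -(card_imset D (can_inj fK)) -(card_imset D' (can_inj fK)).
exact: (wd2 _ minfD).2 _ (dominating_imset fK gK fE dD').
Qed.

Lemma cart_edge_iso (T0 : finType) (e0 : rel T0) :
  graph_iso e1 e2 -> graph_iso (cart_edge e0 e1) (cart_edge e0 e2).
Proof.
case=> f [[g fK gK] fE]; exists (fun u => (u.1, f u.2)); split.
  by exists (fun u => (u.1, g u.2)) => -[x y] /=; rewrite ?fK ?gK.
by move=> [x1 x2] [y1 y2]; rewrite /cart_edge /= fE (can_eq fK).
Qed.

End Isomorphism.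

Section CartesianWithComplete.
Variables (m : nat) (T : finType) (e : rel T).
Local Notation G := (cart_edge (@Kedge m) e).
Implicit Types (u v : 'I_m * T) (D : {set 'I_m * T}).

Lemma dominates_cart u v :
  dominates G u v = (u.2 == v.2) || (u.1 == v.1) && e u.2 v.2.
Proof.
case: u v => [i h] [j k]; rewrite /dominates /cart_edge /Kedge xpair_eqE /=.
by case: (i == j); case: (h == k); case: (e h k).
Qed.

Lemma cart_snd_clique u v : u.2 = v.2 -> u != v -> G u v.
Proof.
case: u v => [i h] [j k] /= <-; rewrite xpair_eqE eqxx andbT => ij.
by rewrite /cart_edge /Kedge /= eqxx ij orbT.
Qed.

Lemma dominating_cart_cover D : dominating G D ->
  [set: 'I_m] \subset fst @: D \/ [set: T] \subset snd @: D.
Proof.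
move/dominatingE=> dD.
case: (boolP ([set: T] \subset snd @: D)) => [|/subsetPn[h _ hD]]; first by right.
left; apply/subsetP => i _; have [u uD] := dD (i, h); rewrite dominates_cart /=.
case/orP => [/eqP uh|/andP[/eqP <- _]]; last exact: imset_f.
by move: hD; rewrite -uh imset_f.
Qed.

Lemma dominating_cart_card D : dominating G D -> minn m #|T| <= #|D|.
Proof.
case/dominating_cart_cover => /subset_leq_card; rewrite cardsT ?card_ord => le.
  by rewrite geq_min (leq_trans le (leq_imset_card _ _)).
by rewrite geq_min (leq_trans le (leq_imset_card _ _)) orbT.
Qed.

Lemma dominating_layer i : dominating G (setX [set i] [set: T]).
Proof.
apply/dominatingE => -[j h]; exists (i, h); first by rewrite !inE eqxx.
by rewrite dominates_cart eqxx.
Qed.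

End CartesianWithComplete.

Lemma rook_well_dominated m : well_dominated (cart_edge (@Kedge m) (@Kedge m)).
Proof.
apply: (well_dominated_of_bounds (k := m)) => D.
  by move/dominating_cart_card; rewrite card_ord minnn.
move=> minD; have [covD|covD] := dominating_cart_cover minD.1.
  have fst_clique (u v : 'I_m * 'I_m) :
      u.1 = v.1 -> u != v -> cart_edge (@Kedge m) (@Kedge m) u v.
    case: u v => [i h] [j k] /= <-; rewrite xpair_eqE eqxx /= => hk.
    by rewrite /cart_edge /Kedge /= eqxx hk.
  by have := minimal_cover_card fst_clique minD covD; rewrite card_ord.
by have := minimal_cover_card (@cart_snd_clique _ _ _) minD covD; rewrite card_ord.
Qed.

(* Listed explicitly because [enum] on ordinals does not reduce under
   [vm_compute]: [insub] goes through the opaque lemma [idP]. *)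
Definition K3P3_vertices : seq ('I_3 * 'I_3) :=
  let ords := [:: Ordinal (isT : 0 < 3); Ordinal (isT : 1 < 3); Ordinal (isT : 2 < 3)] in
  [seq (i, h) | i <- ords, h <- ords].

Lemma K3P3_well_dominated : well_dominated (cart_edge (@Kedge 3) P3edge).
Proof.
apply: (well_dominated_of_bounds (k := 3)) => D.
  by move/dominating_cart_card; rewrite card_ord.
apply: (minimal_dominating_card_le (vs := K3P3_vertices)); first by [].
  by case=> [[[|[|[|i]]] ?] [[|[|[|h]]] ?]].
by vm_compute.
Qed.

Section SimpleGraphs.
Variables (T : finType) (e : rel T).
Hypotheses (e_sym : symmetric e) (e_irr : irreflexive e).

Lemma connected_has_nbr : connected_graph e -> 1 < #|T| -> forall h, exists k, e h k.
Proof.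
move=> conn T_gt1 h; have /card_gt0P[k] : 0 < #|[set~ h]|.
  by rewrite cardsC1 -subn1 subn_gt0.
rewrite !inE => kh; case/connectP: (conn h k) => -[|a p] /=.
  by move=> _ kh'; rewrite kh' eqxx in kh.
by case/andP => eha _ _; exists a.
Qed.

Lemma card2_complete :
  #|T| = 2 -> (forall h, exists k, e h k) -> forall x y, x != y -> e x y.
Proof.
move=> T2 nbr x y xy; have [k exk] := nbr x.
have : k \in [set x; y].
  suff -> : [set x; y] = [set: T] by rewrite in_setT.
  by apply/eqP; rewrite eqEcard subsetT cardsT T2 cards2 xy.
by rewrite !inE => /orP[/eqP kx|/eqP <-] //; rewrite kx e_irr in exk.
Qed.

Lemma complete_graph_iso m :
  #|T| = m -> (forall x y, x != y -> e x y) -> graph_iso e (@Kedge m).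
Proof.
move=> Tm complete; exists (fun x => cast_ord Tm (enum_rank x)); split.
  exists (fun i => enum_val (cast_ord (esym Tm) i)) => x /=.
    by rewrite cast_ordK enum_rankK.
  by rewrite enum_valK cast_ordKV.
move=> x y; rewrite /Kedge (inj_eq (cast_ord_inj (eq_n := Tm))) (inj_eq enum_rank_inj).
by case: (eqVneq x y) => [->|xy]; [rewrite e_irr | rewrite complete].
Qed.

Lemma path3_graph_iso x d y :
  #|T| = 3 -> x != y -> ~~ e x y -> e x d -> e d y -> graph_iso e P3edge.
Proof.
move=> T3 xy nexy exd edy.
have xd : x != d by apply: contraTneq exd => ->; rewrite e_irr.
have dy : d != y by apply: contraTneq edy => ->; rewrite e_irr.
have Txdy t : [|| t == x, t == d | t == y].
  suff : t \in x |: [set d; y] by rewrite !inE.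
  suff -> : x |: [set d; y] = [set: T] by rewrite in_setT.
  apply/eqP; rewrite eqEcard subsetT cardsT T3 cardsU1 cards2 dy !inE.
  by rewrite negb_or xd xy.
pose pos t := if t == x then 0 else if t == d then 1 else 2.
have pos_lt3 t : pos t < 3 by rewrite /pos; case: ifP => //; case: ifP.
have [px pd py] : [/\ pos x = 0, pos d = 1 & pos y = 2].
  by rewrite /pos eqxx eq_sym (negbTE xd) eqxx eq_sym (negbTE xy) eq_sym (negbTE dy).
exists (fun t => Ordinal (pos_lt3 t)); split.
  exists (fun k : 'I_3 => if val k == 0 then x else if val k == 1 then d else y).
    by move=> t; case/or3P: (Txdy t) => /eqP->; rewrite /= ?px ?pd ?py.
  by case=> -[|[|[|k]]] // ?; apply: val_inj; rewrite /= ?px ?pd ?py.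
move=> s t; rewrite /P3edge /=.
case/or3P: (Txdy s) => /eqP->; case/or3P: (Txdy t) => /eqP->;
  by rewrite ?px ?pd ?py ?e_irr // ?[e d x]e_sym ?[e y _]e_sym ?exd ?edy ?(negbTE nexy).
Qed.

End SimpleGraphs.

Section WellDominatedProduct.
Variables (m : nat) (T : finType) (e : rel T).
Hypotheses (m_gt1 : 1 < m) (e_sym : symmetric e) (e_irr : irreflexive e)
  (e_conn : connected_graph e) (T_gt1 : 1 < #|T|) (T_le_m : #|T| <= m).
Hypothesis wdG : well_dominated (cart_edge (@Kedge m) e).
Local Notation G := (cart_edge (@Kedge m) e).
Implicit Types (h k : T) (u v : 'I_m * T) (D S : {set 'I_m * T}).

Let i0 : 'I_m := Ordinal (ltnW m_gt1).
Let i1 : 'I_m := Ordinal m_gt1.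
Let i0_neq_i1 : i0 != i1 := isT.
Let has_nbr := connected_has_nbr e_conn T_gt1.

Lemma private_card D S : dominating G D ->
  {in S, forall u, exists v, private_nbr G D u v} -> #|S| <= #|T|.
Proof.
move=> dD prS; have := well_dominated_private_card wdG dD (dominating_layer e i0) prS.
by rewrite cardsX cards1 cardsT mul1n.
Qed.

Definition nonnbrs h := [set k | (k != h) && ~~ e h k].

Lemma universal_adj d k : nonnbrs d = set0 -> k != d -> e d k.
Proof.
move=> Fd kd; apply: contraT => nedk.
by have := in_set0 k; rewrite -Fd inE kd nedk.
Qed.

Definition star h := setX [set: 'I_m] [set h] :|: setX [set i0] (nonnbrs h).

Lemma card_star h : #|star h| = m + #|nonnbrs h|.
Proof.
rewrite cardsU !cardsX cardsT card_ord !cards1 mul1n muln1.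
suff -> : setX [set: 'I_m] [set h] :&: setX [set i0] (nonnbrs h) = set0.
  by rewrite cards0 subn0.
by apply/setP => -[i k]; rewrite !inE /=; case: eqP; rewrite ?andbF.
Qed.

Lemma star_dominating h : dominating G (star h).
Proof.
apply/dominatingE => -[i k]; case: (eqVneq k h) => [->|kh].
  by exists (i, h); rewrite ?dominates_cart ?eqxx // !inE eqxx.
case ehk : (e h k).
  by exists (i, h); rewrite ?dominates_cart /= ?eqxx ?ehk ?orbT // !inE eqxx.
by exists (i0, k); rewrite ?dominates_cart ?eqxx // !inE eqxx kh ehk orbT.
Qed.

Lemma star_private h u : u \in star h -> (u != (i0, h)) || (nonnbrs h == set0) ->
  exists v, private_nbr G (star h) u v.
Proof.
have [a eha] := has_nbr h.
have ah : a != h by apply: contraTneq eha => ->; rewrite e_irr.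
case: u => i k; rewrite !inE /= => /orP[/eqP-> nondeg|/andP[/eqP-> kF] _].
  exists (i, a) => -[j l]; rewrite !inE dominates_cart /=.
  case/orP => [/eqP->|/andP[/eqP-> lF]].
    by rewrite eq_sym (negbTE ah) /= => /andP[/eqP->].
  case/orP => [/eqP la|/andP[/eqP i0i _]]; first by rewrite la eha andbF in lF.
  by move: nondeg; rewrite -i0i eqxx /= => /eqP/setP/(_ l); rewrite !inE lF.
exists (i1, k) => -[j l]; rewrite !inE dominates_cart /=.
case/orP => [/eqP->|/andP[/eqP-> lF]].
  by case/andP: kF; rewrite eq_sym => /negbTE-> /negbTE->; rewrite andbF.
by case/orP => [/eqP->|]; rewrite // (negbTE i0_neq_i1).
Qed.

Lemma star_card_le h : (m + #|nonnbrs h|).-1 <= #|T|.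
Proof.
rewrite -card_star (cardsD1 (i0, h)) !inE eqxx /= add0n.
apply: private_card (star_dominating h) _ => u /setD1P[ui0 uS].
by apply: star_private; rewrite ?uS ?ui0.
Qed.

Lemma order_eq : #|T| = m.
Proof.
apply/eqP; rewrite eqn_leq T_le_m /=; have /card_gt0P[h _] := ltnW T_gt1.
case: (eqVneq (nonnbrs h) set0) => [Fh|/set0Pn[k kF]].
  have prS : {in star h, forall u, exists v, private_nbr G (star h) u v}.
    by move=> u uS; apply: star_private; rewrite // Fh eqxx orbT.
  by have := private_card (star_dominating h) prS; rewrite card_star Fh cards0 addn0.
have := star_card_le h; rewrite (cardsD1 k) kF addnA addn1 addSn /=.
by apply: leq_trans; rewrite leq_addr.
Qed.

Lemma nonnbrs_sym h k : (k \in nonnbrs h) = (h \in nonnbrs k).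
Proof. by rewrite !inE eq_sym e_sym. Qed.

Lemma nonnbr_adj h x k : x \in nonnbrs h -> k != h -> k != x -> e h k.
Proof.
move=> xF kh; apply: contraNT => nehk.
have : #|nonnbrs h| <= 1.
  by have := star_card_le h; rewrite order_eq; lia.
by move/card_le1P/(_ x xF k); rewrite !inE kh nehk.
Qed.

Lemma exists_universal : exists d, nonnbrs d = set0.
Proof.
suff /existsP[d /eqP] : [exists d, nonnbrs d == set0] by exists d.
apply: contraT; rewrite negb_exists => /forallP noU.
have /card_gt0P[a _] := ltnW T_gt1; have [c eac] := has_nbr a.
have /set0Pn[a' a'F] := noU a; have /set0Pn[c' c'F] := noU c.
have ca : c != a by apply: contraTneq eac => ->; rewrite e_irr.
have eca' : e a' c.
  apply: (nonnbr_adj (x := a)) => //; first by rewrite nonnbrs_sym.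
  by apply: contraTneq eac => ->; move: a'F; rewrite inE => /andP[].
have eac' : e c' a.
  apply: (nonnbr_adj (x := c)); [by rewrite nonnbrs_sym | | by rewrite eq_sym].
  by apply: contraTneq eac => ->; move: c'F; rewrite inE e_sym => /andP[].
set D := setX [set: 'I_m] [set a; c].
have dD : dominating G D.
  apply/dominatingE => -[i k]; case: (boolP (k \in [set a; c])) => [kD|].
    by exists (i, k); rewrite ?dominates_cart ?eqxx // /D in_setX in_setT.
  rewrite !inE negb_or => /andP[ka kc].
  case eak : (e a k).
    by exists (i, a); rewrite ?dominates_cart ?eqxx ?eak ?orbT // /D !inE eqxx.
  have ekc : e k c.
    apply: (nonnbr_adj (x := a)) => //; last by rewrite eq_sym.
    by rewrite !inE eq_sym ka e_sym eak.
  exists (i, c); first by rewrite /D !inE eqxx orbT.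
  by rewrite dominates_cart eqxx e_sym ekc orbT.
have layer_private p q r i : [set p; q] = [set a; c] -> r \in nonnbrs q -> e r p ->
    private_nbr G D (i, p) (i, r).
  move=> pq rq erp [j l]; rewrite /D -pq !inE dominates_cart /=.
  case/orP => /eqP->.
    by case/orP => [/eqP pr|/andP[/eqP-> _]] //; rewrite pr e_irr in erp.
  by move: rq; rewrite inE eq_sym => /andP[/negbTE-> /negbTE->]; rewrite andbF.
have prD : {in D, forall u, exists v, private_nbr G D u v}.
  move=> [i k]; rewrite /D !inE /= => /orP[/eqP->|/eqP->].
    by exists (i, c'); apply: layer_private; rewrite // e_sym.
  by exists (i, a'); apply: layer_private; rewrite 1?setUC // e_sym.
have := private_card dD prD; rewrite /D cardsX cardsT card_ord cards2 eq_sym ca order_eq.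
lia.
Qed.

Definition fan (d x y : T) := setX [set i0] [set x; y] :|: setX [set~ i0] [set d].

Lemma card_fan d x y : x != y -> #|fan d x y| = m.+1.
Proof.
move=> xy; rewrite cardsU !cardsX cards1 cardsC1 card_ord !cards1 cards2 xy mul1n muln1.
suff -> : setX [set i0] [set x; y] :&: setX [set~ i0] [set d] = set0.
  by rewrite cards0 subn0; lia.
by apply/setP => -[i k]; rewrite !inE /=; case: eqP; rewrite ?andbF.
Qed.

Lemma fan_dominating d x y :
  nonnbrs d = set0 -> y \in nonnbrs x -> dominating G (fan d x y).
Proof.
move=> Fd yF; apply/dominatingE => -[j l]; case: (eqVneq j i0) => [->|ji0]; last first.
  exists (j, d); first by rewrite !inE ji0 eqxx orbT.
  rewrite dominates_cart /= eqxx; case: (eqVneq d l) => //= dl.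
  by rewrite universal_adj // eq_sym.
case: (boolP (l \in [set x; y])) => [lxy|].
  by exists (i0, l); rewrite ?dominates_cart ?eqxx // in_setU in_setX in_set1 eqxx lxy.
rewrite !inE negb_or => /andP[lx ly]; exists (i0, x); first by rewrite !inE !eqxx.
by rewrite dominates_cart eqxx (nonnbr_adj yF) ?orbT.
Qed.

Lemma fan_private d x y w :
  nonnbrs d = set0 -> y \in nonnbrs x -> w \notin d |: [set x; y] ->
  {in fan d x y, forall u, exists v, private_nbr G (fan d x y) u v}.
Proof.
move=> Fd yF; rewrite !inE !negb_or => /and3P[wnd wnx wny].
have [yx nexy] : y != x /\ ~~ e x y by move: yF; rewrite inE => /andP.
have xd : x != d by apply: contraTneq yF => ->; rewrite Fd inE.
have yd : y != d by apply: contraTneq yF => ->; rewrite nonnbrs_sym Fd inE.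
have self_private p q : [set p; q] = [set x; y] -> p != d -> q != p -> ~~ e q p ->
    private_nbr G (fan d x y) (i0, p) (i0, p).
  move=> pq pd qp neqp [j l]; rewrite /fan -pq !inE dominates_cart /=.
  case/orP => [/andP[/eqP-> /orP[/eqP->|/eqP->]] //|/andP[ji0 /eqP->]].
    by rewrite (negbTE qp) (negbTE neqp) andbF.
  by rewrite eq_sym (negbTE pd) (negbTE ji0).
move=> -[j l]; rewrite !inE /=.
case/orP => [/andP[/eqP-> /orP[/eqP->|/eqP->]]|/andP[ji0 /eqP->]].
- by exists (i0, x); apply: (self_private x y); rewrite // e_sym.
- by exists (i0, y); apply: (self_private y x); rewrite // 1?setUC // eq_sym.
exists (j, w) => -[j' l']; rewrite !inE dominates_cart /=.
case/orP => [/andP[/eqP-> lxy]|/andP[_ /eqP->]]; last first.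
  by case/orP => [/eqP dw|/andP[/eqP-> _]] //; rewrite dw eqxx in wnd.
rewrite (eq_sym i0) (negbTE ji0) /= orbF => /eqP lw.
by rewrite lw (negbTE wnx) (negbTE wny) in lxy.
Qed.

Lemma complete_of_gt3 : 3 < m -> forall x y, x != y -> e x y.
Proof.
move=> m_gt3 x y xy; apply: contraT => nexy; have [d Fd] := exists_universal.
have yF : y \in nonnbrs x by rewrite inE eq_sym xy nexy.
have /card_gt0P[w] : 0 < #|~: (d |: [set x; y])|.
  rewrite -(ltn_add2l #|d |: [set x; y]|) addn0 cardsC order_eq cardsU1 cards2.
  by case: (d \notin _); case: (x != y); lia.
rewrite inE => wN.
have := private_card (fan_dominating Fd yF) (fan_private Fd yF wN).
by rewrite card_fan // order_eq ltnn.
Qed.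

Lemma well_dominated_cart_cases :
  [\/ m = 2 /\ graph_iso e (@Kedge 2),
      m = 3 /\ (graph_iso e (@Kedge 3) \/ graph_iso e P3edge)
    | 4 <= m /\ graph_iso e (@Kedge m)].
Proof.
have iso_K n : m = n -> (forall x y, x != y -> e x y) -> graph_iso e (@Kedge n).
  by move=> <-; apply: complete_graph_iso order_eq.
have [m_le3|m_gt3] := leqP m 3; last first.
  by apply: Or33; split=> //; apply: iso_K (complete_of_gt3 m_gt3).
have [m2|m3] : m = 2 \/ m = 3 by lia.
  have T2 : #|T| = 2 by rewrite order_eq.
  by apply: Or31; split=> //; apply: iso_K m2 (card2_complete e_irr T2 has_nbr).
apply: Or32; split=> //.
case: (boolP [forall x, forall y, (x != y) ==> e x y]) => [/forallP complete|].
  by left; apply: iso_K m3 _ => x y; apply/implyP; apply: (forallP (complete x)).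
case/forallPn => x /forallPn[y]; rewrite negb_imply => /andP[xy nexy]; right.
have [d Fd] := exists_universal.
have xd : x != d by apply: contraNneq nexy => xd; rewrite xd universal_adj // -xd eq_sym.
have yd : y != d by apply: contraNneq nexy => yd; rewrite yd e_sym universal_adj.
apply: (path3_graph_iso (d := d) e_sym e_irr _ xy nexy); first by rewrite order_eq.
  by rewrite e_sym universal_adj.
exact: universal_adj.
Qed.

End WellDominatedProduct.

Theorem proposition21 (m : nat) (T : finType) (e : rel T) :
  2 <= m ->
  simple_graph e -> connected_graph e ->
  2 <= #|T| -> #|T| <= m ->
  (well_dominated (cart_edge (@Kedge m) e) <->
    [\/ (m = 2 /\ graph_iso e (@Kedge 2)),
        (m = 3 /\ (graph_iso e (@Kedge 3) \/ graph_iso e P3edge))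
      | (4 <= m /\ graph_iso e (@Kedge m))]).
Proof.
move=> m_gt1 [e_sym e_irr] e_conn T_gt1 T_le_m; split.
  exact: well_dominated_cart_cases.
case=> [[-> iso]|[-> [iso|iso]]|[_ iso]];
  apply: (well_dominated_iso (cart_edge_iso _ iso)).
- exact: rook_well_dominated.
- exact: rook_well_dominated.
- exact: K3P3_well_dominated.
- exact: rook_well_dominated.
Qed.
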